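(* Let $Q=(q_n)_{n\ge1}$ be a basic sequence that is infinite in limit, and suppose there exist constants $M$ and $t$ such that $\nu_{i+1}-\nu_i\le Mi$ for all $i>t$. Then for every $Q$-special sequence $F$ and every real $\psi>1$, $$D_n^*(y_F)<\psi\cdot\sqrt{2\lceil M+1\rceil}\cdot\left(2\lceil M+1\rceil+1\right)\cdot n^{-1/2}$$ for all sufficiently large $n$.
   Context: A basic sequence is a sequence $Q=(q_n)_{n\ge1}$ of integers with $q_n\ge 2$; it is infinite in limit if $q_n\to\infty$. $\mathbb{N}$ denotes the positive integers. For each positive integer $j$ let $\nu_j=\min\{N : q_m\ge 2j^2 \text{ for all } m\ge N\}$. Define $l_1=\max(\nu_2-1,1)$ and, recursively for $i\ge 2$, $l_i=\max\big(\min\{k\in\mathbb{N} : l_1+2l_2+\cdots+(i-1)l_{i-1}+ik\ge \nu_{i+1}-1\},1\big)$. Put $L_i=\sum_{j=1}^i jl_j$ (with $L_0=0$). Let $S_Q=\{(a,b,c)\in\mathbb{N}^3 : b\le l_a,\ c\le a\}$ and $\phi_Q(a,b,c)=L_{a-1}+(b-1)a+c$; $\phi_Q$ is a bijection $S_Q\to\mathbb{N}$. A $Q$-special sequence is a family of integers $F=(F_{(a,b,c)})_{(a,b,c)\in S_Q}$ with $F_{(a,b,1)}=0$ for all $(a,b,1)\in S_Q$ and $\frac{F_{(a,b,c)}}{q_{\phi_Q(a,b,c)}}\in\left[\frac{c-1}{a}-\frac{1}{2a^2},\frac{c-1}{a}+\frac{1}{2a^2}\right]$ for $(a,b,c)\in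 S_Q$ with $c>1$. For such $F$ put $E_{F,n}=F_{\phi_Q^{-1}(n)}$ and let $y_F$ be the sequence $\left(E_{F,n}/q_n\right)_{n=1}^\infty$. For a sequence $w=(w_1,w_2,\dots)$ in $[0,1)$, the star discrepancy is $D_n^*(w)=\sup_{0<\gamma\le1}\left|\frac{\#\{1\le k\le n: w_k\in[0,\gamma)\}}{n}-\gamma\right|$. *)

From HB Require Import structures.
From mathcomp Require Import all_boot all_order all_algebra.
From mathcomp Require Import all_classical all_reals.
From Stdlib Require Import ClassicalEpsilon.

Set Implicit Arguments.
Unset Strict Implicit.
Unset Printing Implicit Defensive.
Import Order.TTheory GRing.Theory Num.Theory.

Local Open Scope ring_scope.
Local Open Scope classical_set_scope.

(* least natural number satisfying a boolean predicate (0 if none exists) *)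
Definition least (P : pred nat) : nat :=
  match pselect (exists n, P n) with
  | left e => ex_minn e
  | right _ => 0%N
  end.

(* A basic sequence q = (q_n)_{n>=1}; the value q 0 is irrelevant. *)
Definition basic_seq (q : nat -> nat) : Prop := forall n, (0 < n)%N -> (2 <= q n)%N.
Definition infinite_in_limit (q : nat -> nat) : Prop :=
  forall B, exists N, forall n, (N <= n)%N -> (B <= q n)%N.

Definition nu (q : nat -> nat) (j : nat) : nat :=
  least (fun N => `[< (0 < N)%N /\ forall m, (N <= m)%N -> (2 * j ^ 2 <= q m)%N >]).

(* l_i given L_{i-1} = Lprev *)
Definition lstep (q : nat -> nat) (i Lprev : nat) : nat :=
  if i == 1%N then maxn (nu q 2 - 1) 1
  else maxn (least (fun k => (0 < k)%N && (nu q i.+1 - 1 <= Lprev + i * k)%N)) 1.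

Fixpoint Lsum (q : nat -> nat) (i : nat) : nat :=
  match i with
  | 0 => 0%N
  | i'.+1 => (Lsum q i' + i'.+1 * lstep q i'.+1 (Lsum q i'))%N
  end.

Definition l (q : nat -> nat) (i : nat) : nat := lstep q i (Lsum q i.-1).

Definition inSQ (q : nat -> nat) (t : nat * nat * nat) : Prop :=
  let: (a, b, c) := t in
  [/\ (0 < a)%N, (0 < b)%N, (0 < c)%N, (b <= l q a)%N & (c <= a)%N].

Definition phiQ (q : nat -> nat) (t : nat * nat * nat) : nat :=
  let: (a, b, c) := t in (Lsum q a.-1 + b.-1 * a + c)%N.

Definition phiQ_inv (q : nat -> nat) (n : nat) : nat * nat * nat :=
  epsilon (inhabits (0%N, 0%N, 0%N)) (fun t => inSQ q t /\ phiQ q t = n).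

(* Q-special sequences F : S_Q -> Z, represented as functions on triples *)
Definition Q_special (R : realType) (q : nat -> nat) (F : nat * nat * nat -> int) : Prop :=
  forall a b c, inSQ q (a, b, c) ->
    (c = 1%N -> F (a, b, c) = 0) /\
    ((1 < c)%N ->
       let x : R := (F (a, b, c))%:~R / (q (phiQ q (a, b, c)))%:R in
       (c.-1)%:R / a%:R - (2 * a%:R ^+ 2)^-1 <= x <= (c.-1)%:R / a%:R + (2 * a%:R ^+ 2)^-1).

Definition yF (R : realType) (q : nat -> nat) (F : nat * nat * nat -> int) (n : nat) : R :=
  (F (phiQ_inv q n))%:~R / (q n)%:R.

Definition star_discrepancy (R : realType) (w : nat -> R) (n : nat) : R :=
  sup [set r : R | exists2 g : R, 0 < g <= 1 &
        r = `| (\sum_(1 <= k < n.+1) (((0 <= w k)%R && (w k < g)%R) : nat))%:R / n%:R - g| ].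

From HB Require Import structures.
From mathcomp Require Import all_boot all_order all_algebra.
From mathcomp Require Import all_classical all_reals.
From mathcomp Require Import zify ring lra.
From Stdlib Require Import ClassicalEpsilon.

(* The terms of y_F come in blocks: the block (a, b) consists of a consecutive
   terms, the c-th of which lies within 1/(2a^2) of (c-1)/a.  Hence a complete
   block changes the counting error #{k <= n | y_k < g} - n g by at most 2, and
   the final incomplete block by at most its length.  The growth condition on
   nu forces l_a <= ceil(M+1) for large a, so the number of blocks up to level A
   is at most C + ceil(M+1) A, while n > L_(A-1) >= A(A-1)/2 gives
   A - 1 <= sqrt(2n). *)

Set Implicit Arguments.
Unset Strict Implicit.
Unset Printing Implicit Defensive.
Import Order.TTheory GRing.Theory Num.Theory.

Lemma leastP (P : pred nat) : (exists n, P n) ->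
  P (least P) /\ forall m, P m -> (least P <= m)%N.
Proof. by move=> exP; rewrite /least; case: pselect => // e; case: ex_minnP. Qed.

Section Indexing.

Variable q : nat -> nat.

Lemma l_gt0 i : (0 < l q i)%N.
Proof. by rewrite /l /lstep; case: ifP => _; rewrite leq_maxr. Qed.

Lemma LsumS i : Lsum q i.+1 = (Lsum q i + i.+1 * l q i.+1)%N.
Proof. by []. Qed.

Lemma Lsum_mono : {homo Lsum q : i j / (i <= j)%N}.
Proof.
by apply: homo_leq leqnn leq_trans _ => i; rewrite LsumS leq_addr.
Qed.

Lemma Lsum_triangular i : (i * i.+1 <= 2 * Lsum q i)%N.
Proof. by elim: i => [//|i IH]; rewrite LsumS; have := l_gt0 i.+1; nia. Qed.

Lemma leq_Lsum i : (i <= Lsum q i)%N.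
Proof. by have := Lsum_triangular i; nia. Qed.

Lemma nu_le_Lsum i : (nu q i.+2 - 1 <= Lsum q i.+1)%N.
Proof.
rewrite LsumS /l /lstep /=; case: i => [|i] /=; first by rewrite mul1n leq_maxl.
set P := (fun k => _).
have exP : exists k, P k by exists (nu q i.+3).+1; rewrite /P /=; nia.
have [/andP [_ leP] _] := leastP exP.
by have := leq_maxl (least P) 1; nia.
Qed.

Lemma l_le j K : (1 < j)%N -> (0 < K)%N ->
  (nu q j.+1 <= nu q j + j * K)%N -> (l q j <= K)%N.
Proof.
case: j => [|[|i]] // _ K0 nuK; rewrite /l /lstep /=.
set P := (fun k => _).
have PK : P K.
  rewrite /P K0 /=; have := nu_le_Lsum i; rewrite LsumS /l /=.
  by move: nuK; move: (i.+2 * K) => x; lia.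
by have [_ /(_ K PK) leK] := leastP (ex_intro _ K PK); rewrite geq_max leK K0.
Qed.

Lemma phiQ_range a b c : inSQ q (a, b, c) ->
  (Lsum q a.-1 < phiQ q (a, b, c) <= Lsum q a)%N.
Proof.
case: a => [[]//|a] [_ b0 c0 bl ca]; rewrite LsumS /= -addnA.
rewrite -[X in (X < _)%N]addn0 ltn_add2l addn_gt0 c0 orbT leq_add2l /=.
apply: (leq_trans (leq_add (leqnn _) ca)).
by rewrite -mulSnr prednK // mulnC leq_mul2l bl orbT.
Qed.

Lemma phiQ_inj t1 t2 : inSQ q t1 -> inSQ q t2 -> phiQ q t1 = phiQ q t2 -> t1 = t2.
Proof.
case: t1 t2 => [[a b] c] [[a' b'] c'] S1 S2 E.
have /andP [lo1 hi1] := phiQ_range S1; have /andP [lo2 hi2] := phiQ_range S2.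
case: S1 S2 => [a0 b0 c0 _ ca] [a0' b0' c0' _ ca'].
have ea : a = a'.
  apply/eqP; rewrite eqn_leq; apply/andP; split; rewrite leqNgt; apply/negP => lt.
    have /Lsum_mono : (a' <= a.-1)%N by rewrite -ltnS prednK.
    by lia.
  have /Lsum_mono : (a <= a'.-1)%N by rewrite -ltnS prednK.
  by lia.
subst a'; move: E => /= E.
have eb : b.-1 = b'.-1.
  apply/eqP; rewrite eqn_leq; apply/andP; split; rewrite leqNgt; apply/negP => lt.
    by have := leq_mul lt (leqnn a); rewrite mulSn; lia.
  by have := leq_mul lt (leqnn a); rewrite mulSn; lia.
by rewrite -(prednK b0) -(prednK b0') eb in E *; congr (_, _, _); lia.
Qed.

Lemma phiQ_invK t : inSQ q t -> phiQ_inv q (phiQ q t) = t.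
Proof.
move=> St; rewrite /phiQ_inv.
have ex : exists t', inSQ q t' /\ phiQ q t' = phiQ q t by exists t.
by have [St' E] := epsilon_spec (inhabits (0%N, 0%N, 0%N)) _ ex; apply: phiQ_inj.
Qed.

Lemma phiQ_surj n : (0 < n)%N -> exists2 t, inSQ q t & n = phiQ q t.
Proof.
move=> n0; have exA : exists A, (n <= Lsum q A)%N by exists n; apply: leq_Lsum.
case: (ex_minnP exA) => -[|A]; first by rewrite leqn0 => /eqP n_eq0; rewrite n_eq0 in n0.
move=> nA minA; have An : (Lsum q A < n)%N by rewrite ltnNge; apply/negP => /minA; lia.
move: nA; rewrite LsumS => nA.
set r := (n - Lsum q A).-1.
have rlt : (r < A.+1 * l q A.+1)%N by rewrite /r; lia.
exists (A.+1, (r %/ A.+1).+1, (r %% A.+1).+1).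
  by split; rewrite // ?ltn_pmod // ltn_divLR // mulnC.
by rewrite /= (divn_eq r A.+1) in rlt *; rewrite /r in rlt *; lia.
Qed.

Definition nblocks a := (\sum_(1 <= j < a.+1) l q j)%N.

Lemma nblocksS a : nblocks a.+1 = (nblocks a + l q a.+1)%N.
Proof. by rewrite /nblocks big_nat_recr. Qed.

Lemma nblocks_mono : {homo nblocks : i j / (i <= j)%N}.
Proof. by apply: homo_leq leqnn leq_trans _ => i; rewrite nblocksS leq_addr. Qed.

Lemma nblocks_linear T K : (forall j, (T <= j)%N -> (l q j <= K)%N) ->
  forall a, (nblocks a <= nblocks T + K * a)%N.
Proof.
move=> lK; elim=> [|a IH]; first by rewrite /nblocks big_geq //; lia.
rewrite nblocksS mulnS.
by case: (leqP a.+1 T) => [/nblocks_mono|/ltnW /lK]; rewrite ?nblocksS; lia.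
Qed.

End Indexing.

Local Open Scope ring_scope.

Lemma leq_sum_b1 c (b : 'I_c -> bool) : (\sum_(i < c) b i <= c)%N.
Proof.
by rewrite -[c in (_ <= c)%N]card_ord -sum1_card; apply: leq_sum => i _; apply: leq_b1.
Qed.

Section Counting.

Variable R : realFieldType.

Definition nat_below (m : nat) (x : R) : nat := (\sum_(i < m) ((i%:R < x)%R : nat))%N.

Lemma nat_below_ub m x : -1 <= x -> (nat_below m x)%:R <= x + 1.
Proof.
move=> x_ge; elim: m => [|m IH]; first by rewrite /nat_below big_ord0 /=; lra.
rewrite /nat_below big_ord_recr /= natrD; case: ltrP => //= mx; last by rewrite addr0.
by have := leq_sum_b1 (fun i : 'I_m => i%:R < x); rewrite -(ler_nat R) /nat_below; lra.
Qed.

Lemma nat_below_lb m x y : y <= x -> y <= m%:R -> y <= (nat_below m x)%:R.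
Proof.
elim: m y => [|m IH] y yx; first by rewrite /nat_below big_ord0.
rewrite -natr1 /nat_below big_ord_recr /= natrD => ym.
case: ltrP => /= mx; last by rewrite addr0; apply: IH => //; lra.
by have := IH (y - 1) ltac:(lra) ltac:(lra); rewrite /nat_below; lra.
Qed.

Variables (w : nat -> R) (g : R).

Definition count_lt (n : nat) : nat :=
  (\sum_(1 <= k < n.+1) (((0 <= w k) && (w k < g))%R : nat))%N.

Definition count_err (n : nat) : R := (count_lt n)%:R - n%:R * g.

Lemma count_lt_addn P c : count_lt (P + c) =
  (count_lt P + \sum_(i < c) (((0 <= w (P + i.+1)) && (w (P + i.+1) < g))%R : nat))%N.
Proof.
elim: c => [|c IH]; first by rewrite addn0 big_ord0 addn0.
by rewrite big_ord_recr /= addnA -IH addnS /count_lt big_nat_recr.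
Qed.

Lemma count_err_addn P c S : count_lt (P + c) = (count_lt P + S)%N ->
  count_err (P + c) - count_err P = S%:R - c%:R * g.
Proof. by rewrite /count_err => ->; rewrite !natrD; ring. Qed.

Lemma count_err_addn_le P c : 0 <= g <= 1 ->
  `|count_err (P + c) - count_err P| <= c%:R.
Proof.
case/andP => g0 g1; rewrite (count_err_addn (count_lt_addn P c)).
set S := (\sum_(i < c) _)%N.
have S_le : (S%:R <= c%:R :> R) by rewrite ler_nat leq_sum_b1.
have cg : c%:R * g <= c%:R by rewrite ler_piMr.
have cg0 : 0 <= c%:R * g by rewrite mulr_ge0.
have S0 : 0 <= S%:R :> R by [].
by rewrite ler_norml; apply/andP; split; lra.
Qed.

Lemma count_err_block P a : (0 < a)%N -> 0 < g <= 1 ->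
  (forall i : 'I_a, 0 <= w (P + i.+1) /\ `|w (P + i.+1) * a%:R - i%:R| <= 2^-1) ->
  `|count_err (P + a) - count_err P| <= 2.
Proof.
move=> a0 /andP [g0 g1] wP; rewrite (count_err_addn (count_lt_addn P a)).
set S := (\sum_(i < a) _)%N.
have a_gt0 : 0 < a%:R :> R by rewrite ltr0n.
(* S lies between the numbers of integers i < a below a g - 1/2 and a g + 1/2. *)
have S_ge : (nat_below a (a%:R * g - 2^-1) <= S)%N.
  apply: leq_sum => i _; case: ltrP => //= lt_i.
  have [w0] := wP i; rewrite ler_norml => /andP [_ hi].
  suff -> : w (P + i.+1) < g by rewrite w0.
  by rewrite -(ltr_pM2r a_gt0); lra.
have S_le : (S <= nat_below a (a%:R * g + 2^-1))%N.
  apply: leq_sum => i _; case/boolP: (_ && _) => //= /andP [_ lt_w].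
  have [_] := wP i; rewrite ler_norml => /andP [lo _].
  suff -> : i%:R < a%:R * g + 2^-1 by [].
  by rewrite -(ltr_pM2r a_gt0) in lt_w; lra.
have ag : a%:R * g <= a%:R by rewrite ler_piMr // ltW.
have ag0 : 0 <= a%:R * g by rewrite mulr_ge0 // ltW.
have := @nat_below_ub a (a%:R * g + 2^-1) ltac:(lra).
have := @nat_below_lb a _ _ (lexx (a%:R * g - 2^-1)) ltac:(lra).
move: S_ge S_le; rewrite -!(ler_nat R) => S_ge S_le lb ub.
by rewrite ler_norml; apply/andP; split; lra.
Qed.

End Counting.

Lemma star_discrepancy_le (R : realType) (w : nat -> R) n B : (0 < n)%N ->
  (forall g, 0 < g <= 1 -> `|count_err w g n| <= B) ->
  star_discrepancy w n <= B / n%:R.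
Proof.
move=> n0 errB; have n_gt0 : 0 < n%:R :> R by rewrite ltr0n.
apply: ge_sup => [|_ [g g01 ->]]; first by eexists; exists 1 => //; rewrite ltr01 lexx.
rewrite -/(count_lt w g n).
have -> : (count_lt w g n)%:R / n%:R - g = count_err w g n / n%:R.
  by rewrite /count_err; field; rewrite gt_eqF.
by rewrite normrM normfV (gtr0_norm n_gt0) ler_pM2r ?invr_gt0 // errB.
Qed.

Section SpecialSequence.

Variables (R : realType) (q : nat -> nat) (F : nat * nat * nat -> int).
Hypothesis HF : Q_special R q F.

Lemma yF_phiQ a b c : inSQ q (a, b, c) ->
  0 <= yF R q F (phiQ q (a, b, c)) /\
  `|yF R q F (phiQ q (a, b, c)) * a%:R - (c.-1)%:R| <= 2^-1.
Proof.
move=> Sabc; have [a0 _ c0 _ _] := Sabc; have [F1 Fc] := HF Sabc.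
rewrite /yF phiQ_invK //; have a_gt0 : 0 < a%:R :> R by rewrite ltr0n.
have [c_le1|c_gt1] := leqP c 1.
  have -> : c.-1 = 0%N by lia.
  rewrite F1; last by lia.
  by rewrite !mul0r subrr normr0; split=> //; rewrite invr_ge0 ler0n.
have := Fc c_gt1; rewrite /= -ler_distl; set x := (F _)%:~R / _ => dist.
have err : `|x * a%:R - (c.-1)%:R| <= (2 * a%:R)^-1.
  have -> : x * a%:R - (c.-1)%:R = (x - (c.-1)%:R / a%:R) * a%:R.
    by field; rewrite gt_eqF.
  rewrite normrM (gtr0_norm a_gt0).
  have -> : (2 * a%:R)^-1 = (2 * a%:R ^+ 2)^-1 * a%:R :> R.
    by field; rewrite gt_eqF.
  by rewrite (ler_pM2r a_gt0).
have half : (2 * a%:R)^-1 <= 2^-1 :> R.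
  by rewrite invfM ler_piMr ?invr_ge0 ?invf_le1 ?ler1n.
have c1 : 1 <= (c.-1)%:R :> R by rewrite ler1n; lia.
split; last exact: le_trans err half.
move: err; rewrite ler_distl => /andP [lo _].
by rewrite -(pmulr_lge0 _ a_gt0); lra.
Qed.

Variable g : R.
Hypothesis g01 : 0 < g <= 1.

Local Notation err := (count_err (yF R q F) g).

Lemma count_err_Lsum_addn a : `|err (Lsum q a)| <= 2 * (nblocks q a)%:R ->
  forall b, (b <= l q a.+1)%N -> `|err (Lsum q a + b * a.+1)| <= 2 * (nblocks q a + b)%:R.
Proof.
move=> err_a; elim=> [|b IHb] bl; first by rewrite mul0n !addn0.
have block : `|err (Lsum q a + b * a.+1 + a.+1) - err (Lsum q a + b * a.+1)| <= 2.
  apply: count_err_block => // i.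
  have Si : inSQ q (a.+1, b.+1, i.+1) by split => //; apply: ltn_ord.
  exact: yF_phiQ Si.
have := ler_normD (err (Lsum q a + b * a.+1 + a.+1) - err (Lsum q a + b * a.+1))
                  (err (Lsum q a + b * a.+1)).
have := IHb (ltnW bl); rewrite subrK mulSnr addnA (addnS (nblocks q a) b) -natr1; lra.
Qed.

Lemma count_err_Lsum a : `|err (Lsum q a)| <= 2 * (nblocks q a)%:R.
Proof.
elim: a => [|a IH].
  by rewrite /count_err /count_lt /nblocks !big_geq // mul0r subrr normr0 mulr0.
by have := count_err_Lsum_addn IH (leqnn _); rewrite mulnC -LsumS -nblocksS.
Qed.

Lemma count_err_phiQ A B C : inSQ q (A, B, C) ->
  `|err (phiQ q (A, B, C))| <= 2 * (nblocks q A)%:R + A%:R.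
Proof.
case: A => [[]//|a] [_ b0 c0 bl ca].
have g01' : 0 <= g <= 1 by case/andP: g01 => /ltW -> ->.
have := count_err_addn_le (yF R q F) (Lsum q a + B.-1 * a.+1) C g01'.
have := count_err_Lsum_addn (count_err_Lsum a) (leq_trans (leq_pred B) bl).
have := ler_normD (err (phiQ q (a.+1, B, C)) - err (Lsum q a + B.-1 * a.+1))
                  (err (Lsum q a + B.-1 * a.+1)).
have : (nblocks q a + B.-1)%:R + 1 <= (nblocks q a.+1)%:R :> R.
  by rewrite natr1 ler_nat nblocksS; lia.
have : C%:R <= a.+1%:R :> R by rewrite ler_nat.
rewrite subrK /=; lra.
Qed.

End SpecialSequence.

Lemma not_eventually_decreasing (f : nat -> nat) T :
  ~ (forall j, (T <= j)%N -> (f j.+1 < f j)%N).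
Proof.
move=> decr; have drop m : (f (T + m) + m <= f T)%N.
  by elim: m => [|m IH]; rewrite ?addn0 // !addnS; have := decr (T + m)%N (leq_addr _ _); lia.
by have := drop (f T).+1; lia.
Qed.

Lemma truncnS_le_gt (R : archiRealDomainType) (x : R) n :
  ((Num.truncn x).+1 <= n)%N -> (0 < n)%N /\ x < n%:R.
Proof.
move=> le_n; split; first by apply: leq_trans le_n.
by apply: lt_le_trans (truncnS_gt x) _; rewrite ler_nat.
Qed.

Section NuIncrements.

Variables (R : realType) (q : nat -> nat) (M t : R).
Hypothesis nu_incr : forall i : nat, (0 < i)%N -> t < i%:R ->
  (nu q i.+1)%:R - (nu q i)%:R <= M * i%:R.

Lemma nu_incr_bound_ge0 : 0 <= M.
Proof.
rewrite leNgt; apply/negP => M_lt0.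
apply: (@not_eventually_decreasing (nu q) (Num.truncn t).+1) => j /truncnS_le_gt [j0 tj].
have := nu_incr j0 tj; have : M * j%:R < 0 by rewrite pmulr_llt0 ?ltr0n.
by rewrite -(ltr_nat R); lra.
Qed.

Lemma l_eventually_le K : M <= K%:R -> (0 < K)%N ->
  exists T, forall j, (T <= j)%N -> (l q j <= K)%N.
Proof.
move=> MK K0; exists (maxn 2 (Num.truncn t).+1) => j.
rewrite geq_max => /andP [j2 /truncnS_le_gt [j0 tj]].
apply: l_le => //; rewrite -(ler_nat R) natrD natrM.
have : M * j%:R <= j%:R * K%:R by rewrite mulrC ler_wpM2l.
by have := nu_incr j0 tj; lra.
Qed.

End NuIncrements.

Lemma eventually_affine_lt (R : archiRealFieldType) (C X psi : R) : 1 < psi -> 0 < X ->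
  exists N : nat, forall a : nat, (N <= a)%N -> C + X * a%:R < psi * X * (a%:R - 1).
Proof.
move=> psi_gt1 X_gt0; have pX : 0 < (psi - 1) * X by rewrite mulr_gt0 // subr_gt0.
exists (Num.truncn ((C + psi * X) / ((psi - 1) * X))).+1 => a /truncnS_le_gt [_].
by rewrite ltr_pdivrMr //; lra.
Qed.

Lemma lt_div_sqrt (R : rcfType) (Y Z x : R) : 0 < x ->
  Y < Z * Num.sqrt x -> Y / x < Z * (Num.sqrt x)^-1.
Proof.
move=> x_gt0 YZ; have s_gt0 : 0 < Num.sqrt x by rewrite sqrtr_gt0.
rewrite -{1}(sqr_sqrtr (ltW x_gt0)) expr2 invfM mulrA ltr_pM2r ?invr_gt0 //.
by rewrite ltr_pdivrMr.
Qed.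

Lemma Lsum_index_le_sqrt (R : rcfType) q a n K : (Lsum q a < n)%N -> (0 < K)%N ->
  a%:R <= Num.sqrt (2 * K%:R) * Num.sqrt n%:R :> R.
Proof.
move=> lt_n K_gt0; rewrite -sqrtrM ?mulr_ge0 // -[a%:R]ger0_norm // -sqrtr_sqr.
rewrite ler_sqrt ?mulr_ge0 // -natrX -!natrM ler_nat.
have := Lsum_triangular q a; have := leq_mul (leqnn a) (leqnSn a).
have : (2 * n <= 2 * K * n)%N by rewrite mulnAC leq_pmulr.
move: (a * a.+1)%N => p; rewrite expnS expn1; lia.
Qed.

Theorem mainTheorem5 (R : realType) (q : nat -> nat) (M t : R) :
  basic_seq q -> infinite_in_limit q ->
  (forall i : nat, (0 < i)%N -> t < i%:R ->
     (nu q i.+1)%:R - (nu q i)%:R <= M * i%:R) ->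
  forall (F : nat * nat * nat -> int), Q_special R q F ->
  forall psi : R, 1 < psi ->
  exists N : nat, forall n : nat, (N <= n)%N ->
    star_discrepancy (yF R q F) n <
      psi * Num.sqrt (2 * (Num.ceil (M + 1))%:~R)
          * (2 * (Num.ceil (M + 1))%:~R + 1) * (Num.sqrt n%:R)^-1.
Proof.
move=> _ _ nu_incr F HF psi psi_gt1.
have M_ge0 := nu_incr_bound_ge0 nu_incr.
set K := `|Num.ceil (M + 1)|%N.
have eK : (Num.ceil (M + 1))%:~R = K%:R :> R.
  by rewrite natr_absz ger0_norm // ceil_ge0; lra.
have MK : M + 1 <= K%:R by rewrite -eK ceil_ge.
have K_gt0 : (0 < K)%N by rewrite -(ltr_nat R); lra.
have [T lK] : exists T, forall j, (T <= j)%N -> (l q j <= K)%N.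
  by apply: (l_eventually_le nu_incr) K_gt0; lra.
rewrite eK; set X : R := 2 * K%:R + 1.
have X_gt0 : 0 < X by rewrite /X; have := ler0n R K; lra.
have [A0 A0_lt] := eventually_affine_lt (2 * (nblocks q T)%:R) psi_gt1 X_gt0.
exists (Lsum q A0).+1 => n lt_n; have n_gt0 : (0 < n)%N by apply: leq_trans lt_n.
have [[[A B] C] SABC En] := phiQ_surj q n_gt0.
have /andP [lo hi] := phiQ_range SABC; rewrite -En in lo hi.
have A_gt0 : (0 < A)%N by case: SABC.
have A0A : (A0 <= A)%N by rewrite leqNgt; apply/negP => /ltnW /(Lsum_mono q); lia.
have errB g : 0 < g <= 1 -> `|count_err (yF R q F) g n| <= 2 * (nblocks q A)%:R + A%:R.
  by move=> g01; rewrite En; exact (count_err_phiQ HF g01 SABC).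
apply: le_lt_trans (star_discrepancy_le n_gt0 errB) _; apply: lt_div_sqrt; first by rewrite ltr0n.
have : (nblocks q A)%:R <= (nblocks q T)%:R + K%:R * A%:R :> R.
  by rewrite -natrM -natrD ler_nat nblocks_linear.
have : psi * X * (A%:R - 1) <= psi * X * (Num.sqrt (2 * K%:R) * Num.sqrt n%:R).
  rewrite ler_pM2l ?mulr_gt0 //; last lra.
  by rewrite -(prednK A_gt0) -natr1 addrK (Lsum_index_le_sqrt _ lo K_gt0).
by have := A0_lt A A0A; rewrite /X; lra.
Qed.
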